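(* Let $B$ be a Boolean algebra, let $U,V,W\subset B^n$ be Boolean domains over $B$ with $U\cup V\subset W$, and let $F:U\to V$ be a Boolean isomorphism. Then there is a Boolean isomorphism $F':W\to W$ whose restriction to $U$ is $F$.
   Context: $B$ is a fixed Boolean algebra, with operations $\vee,\wedge$, complement, and symmetric difference $a\triangle b=(a\setminus b)\vee(b\setminus a)$. A Boolean function $f:B^n\to B$ is a function given by a polynomial expression built from the variables, elements of $B$, and the Boolean operations $\vee,\wedge$ and complement (e.g. $f(x_1,x_2)=(x_1\vee x_2)\triangle a$ with $a\in B$ fixed). A Boolean domain is a set $V=\{x\in B^n: f(x)=0\}$ for some Boolean function $f:B^n\to B$. If $U\subset B^n$ and $V\subset B^m$ are Boolean domains, a map $F:U\to V$ is a Boolean transformation if there are Boolean functions $F_1,\dots,F_m:B^n\to B$ with $F(x)=(F_1(x),\dots,F_m(x))$ for all $x\in U$. A Boolean isomorphism is a bijective Boolean transformation. *)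

(* A Boolean algebra is a complemented distributive lattice
   with top and bottom: mathcomp's ctbDistrLatticeType. *)
From HB Require Import structures.
From mathcomp Require Import all_boot all_order.
Set Implicit Arguments. Unset Strict Implicit. Unset Printing Implicit Defensive.
Import Order.Theory.
Local Open Scope order_scope.

Inductive bterm (T : Type) (n : nat) : Type :=
| BVar : 'I_n -> bterm T n
| BConst : T -> bterm T n
| BJoin : bterm T n -> bterm T n -> bterm T n
| BMeet : bterm T n -> bterm T n -> bterm T n
| BCompl : bterm T n -> bterm T n.

Fixpoint beval d (B : ctbDistrLatticeType d) n (t : bterm B n) (x : 'I_n -> B) : B :=
  match t with
  | BVar i => x i
  | BConst a => a
  | BJoin t1 t2 => beval t1 x `|` beval t2 x
  | BMeet t1 t2 => beval t1 x `&` beval t2 x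
  | BCompl t1 => ~` beval t1 x
  end.

Definition boolean_function d (B : ctbDistrLatticeType d) n (f : ('I_n -> B) -> B) : Prop :=
  exists t : bterm B n, forall x, f x = beval t x.

Definition boolean_domain d (B : ctbDistrLatticeType d) n (U : ('I_n -> B) -> Prop) : Prop :=
  exists f, boolean_function f /\ forall x, U x <-> f x = \bot.

(* F : U -> V (represented by a total function on B^n) is a Boolean
   transformation: it maps U into V and agrees on U with a tuple of Boolean
   functions. *)
Definition boolean_transformation d (B : ctbDistrLatticeType d) n m
  (U : ('I_n -> B) -> Prop) (V : ('I_m -> B) -> Prop) (F : ('I_n -> B) -> ('I_m -> B)) : Prop :=
  (forall x, U x -> V (F x)) /\
  exists Fs : 'I_m -> (('I_n -> B) -> B),
    (forall i, boolean_function (Fs i)) /\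
    forall x, U x -> forall i, F x i = Fs i x.

Definition boolean_isomorphism d (B : ctbDistrLatticeType d) n m
  (U : ('I_n -> B) -> Prop) (V : ('I_m -> B) -> Prop) (F : ('I_n -> B) -> ('I_m -> B)) : Prop :=
  boolean_transformation U V F /\
  (forall x y, U x -> U y -> F x = F y -> x = y) /\
  (forall y, V y -> exists x, U x /\ F x = y).

(* Let U, V, W be zero sets in B^n of expressions tU, tV, tW, with U, V
   contained in W, and F : U -> V a Boolean isomorphism with components tF.
   Evaluating tU, tV, tW, tF at the 2^n corners of B^n (points with
   coordinates in {bot, top}) gives finitely many constants of B; their
   minterms, the cells, partition B.  Every expression is piecewise
   constant: below a cell and below a minterm of the coordinates of x it
   agrees with its value at a corner.  Hence on a nonzero cell s the data
   become finite: sets of corners Ucell s, Vcell s contained in Wcell s and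
   a bijection Fcell s : Ucell s -> Vcell s (seen by completing corners with
   a fixed point of U).  Each such bijection extends to a permutation of
   the corners preserving Wcell s, and gluing these permutations along cells
   and minterms gives the required Boolean isomorphism of W. *)

From HB Require Import structures.
From mathcomp Require Import all_boot all_order all_fingroup.
From Stdlib Require Import Classical ClassicalEpsilon FunctionalExtensionality.
Set Implicit Arguments. Unset Strict Implicit. Unset Printing Implicit Defensive.
Import Order.Theory.
Local Open Scope order_scope.

Section Minterms.
Variables (d : Order.disp_t) (B : ctbDistrLatticeType d).
Implicit Types (m a z : B).

(* Meet distributes over finite joins; registering (meet, join) as a
   multiplicative/additive pair lets bigop's distributivity lemmas apply. *)
HB.instance Definition _ :=
  Monoid.isAddLaw.Build B (@Order.meet d B) (@Order.join d B) (@meetUl d B) (@meetUr d B).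

Definition bv (b : bool) : B := if b then \top else \bot.

Definition lit (b : bool) z := if b then z else ~` z.

Definition minterm (I : finType) (y : I -> B) (s : {ffun I -> bool}) : B :=
  \meet_(i : I) lit (s i) (y i).

Lemma meet_bv m b : m `&` bv b = if b then m else \bot.
Proof. by case: b; rewrite ?meetx1 ?meetx0. Qed.

Lemma bv_inj m b1 b2 : m != \bot -> m `&` bv b1 = m `&` bv b2 -> b1 = b2.
Proof. by move=> /eqP hm; rewrite !meet_bv; case: b1; case: b2 => // h; case: hm. Qed.

Lemma minterm_cover (I : finType) (y : I -> B) :
  \join_(s : {ffun I -> bool}) minterm y s = \top.
Proof.
rewrite /minterm -(bigA_distr_bigA (fun i b => lit b (y i))).
by apply: big1 => i _; rewrite big_bool /= joinxC.
Qed.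

Lemma minterm_disj (I : finType) (y : I -> B) (s t : {ffun I -> bool}) :
  s != t -> minterm y s `&` minterm y t = \bot.
Proof.
move=> hst; have [i hi] : exists i, s i != t i.
  apply/existsP; apply: contraR hst => /existsPn hn; apply/eqP/ffunP => i.
  exact/eqP/negPn/hn.
apply/eqP; rewrite -lex0.
apply: le_trans (leI2 (meets_inf _ (j := i) _) (meets_inf _ (j := i) _)) _ => //.
by rewrite /lit; move: hi; case: (s i); case: (t i) => // _; rewrite ?meetxC ?meetCx.
Qed.

Lemma minterm_val (I : finType) (y : I -> B) (s : {ffun I -> bool}) i m :
  m <= minterm y s -> m `&` y i = m `&` bv (s i).
Proof.
move=> hm; have := le_trans hm (meets_inf _ (j := i) isT); rewrite meet_bv /lit.
by case: (s i) => h; [apply/meet_idPl | apply/eqP; rewrite disj_leC].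
Qed.

Lemma minterm_ge (I : finType) (y : I -> B) (s : {ffun I -> bool}) m :
  (forall i, m `&` y i = m `&` bv (s i)) -> m <= minterm y s.
Proof.
move=> h; apply/meetsP => i _; rewrite /lit; have := h i; rewrite meet_bv.
by case: (s i) => hi; [apply/meet_idPl | rewrite -disj_leC hi].
Qed.

Lemma le_nonzero m a : m <= a -> m != \bot -> a != \bot.
Proof. by move=> ma; apply: contraNneq => a0; rewrite -lex0 -a0. Qed.

Lemma eq_on_cover (K : finType) (p : K -> B) z1 z2 :
  \join_(k : K) p k = \top -> (forall k, p k `&` z1 = p k `&` z2) -> z1 = z2.
Proof.
move=> hc h; rewrite -(meet1x z1) -(meet1x z2) -hc !big_distrl /=.
by apply: eq_bigr => k _; exact: h.
Qed.

Lemma cover_meets (K : finType) (p : K -> B) m :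
  \join_(k : K) p k = \top -> m != \bot -> exists k, m `&` p k != \bot.
Proof.
move=> hc hm; suff /existsP[k hk] : [exists k, m `&` p k != \bot] by exists k.
apply: contraNT hm => /existsPn hn; apply/eqP.
rewrite -[LHS]meetx1 -hc big_distrr /=; apply: big1 => k _.
exact/eqP/negPn/hn.
Qed.

Lemma eq_on_halves a z1 z2 : a `&` z1 = a `&` z2 -> ~` a `&` z1 = ~` a `&` z2 -> z1 = z2.
Proof. by move=> h1 h2; rewrite -(meet1x z1) -(meet1x z2) -(joinxC a) !meetUl h1 h2. Qed.

Variable n : nat.
Implicit Types (x y : 'I_n -> B) (t : bterm B n) (e : {ffun 'I_n -> bool}).

Lemma beval_local t m x y :
  (forall i, m `&` x i = m `&` y i) -> m `&` beval t x = m `&` beval t y.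
Proof.
move=> h; elim: t => [i|c|t1 IH1 t2 IH2|t1 IH1 t2 IH2|t1 IH1] //=.
- by rewrite !meetUr IH1 IH2.
- by rewrite -[m in LHS]meetxx meetACA IH1 IH2 meetACA meetxx.
- have C z : m `&` ~` z = m `&` ~` (m `&` z) by rewrite complI meetUr meetxC join0x.
  by rewrite C IH1 -C.
Qed.

Definition corner e : 'I_n -> B := fun i => bv (e i).

Lemma beval_corner t m x e : m <= minterm x e -> m `&` beval t x = m `&` beval t (corner e).
Proof. by move=> hm; apply: beval_local => i; exact: minterm_val. Qed.

Lemma corner_inj m e1 e2 :
  m != \bot -> (forall i, m `&` corner e1 i = m `&` corner e2 i) -> e1 = e2.
Proof. by move=> hm h; apply/ffunP => i; exact: bv_inj hm (h i). Qed.

Definition mix a x y : 'I_n -> B := fun i => (a `&` x i) `|` (~` a `&` y i).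

Lemma mix_l a x y i : a `&` mix a x y i = a `&` x i.
Proof. by rewrite /mix meetUr meetA meetxx meetA meetxC meet0x joinx0. Qed.

Lemma mix_r a x y i : ~` a `&` mix a x y i = ~` a `&` y i.
Proof. by rewrite /mix meetUr meetA meetCx meet0x meetA meetxx join0x. Qed.

Lemma beval_mix_l t a x y : a `&` beval t (mix a x y) = a `&` beval t x.
Proof. by apply: beval_local => i; exact: mix_l. Qed.

Lemma beval_mix_r t a x y : ~` a `&` beval t (mix a x y) = ~` a `&` beval t y.
Proof. by apply: beval_local => i; exact: mix_r. Qed.

Lemma beval_mix_zero t a x y :
  a `&` beval t x = \bot -> beval t y = \bot -> beval t (mix a x y) = \bot.
Proof.
move=> hx hy; apply: (eq_on_halves (a := a)); first by rewrite beval_mix_l hx meetx0.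
by rewrite beval_mix_r hy meetx0.
Qed.

End Minterms.

Section BooleanFunctions.
Variables (d : Order.disp_t) (B : ctbDistrLatticeType d) (n : nat).
Implicit Types (f g : ('I_n -> B) -> B).

Lemma bf_ext f g : boolean_function f -> f =1 g -> boolean_function g.
Proof. by move=> [t h] e; exists t => x; rewrite -e h. Qed.

Lemma bf_var i : boolean_function (fun x : 'I_n -> B => x i).
Proof. by exists (BVar B i). Qed.

Lemma bf_const (c : B) : boolean_function (fun x : 'I_n -> B => c).
Proof. by exists (BConst n c). Qed.

Lemma bf_join f g :
  boolean_function f -> boolean_function g -> boolean_function (fun x => f x `|` g x).
Proof. by move=> [t1 h1] [t2 h2]; exists (BJoin t1 t2) => x /=; rewrite h1 h2. Qed.

Lemma bf_meet f g :
  boolean_function f -> boolean_function g -> boolean_function (fun x => f x `&` g x).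
Proof. by move=> [t1 h1] [t2 h2]; exists (BMeet t1 t2) => x /=; rewrite h1 h2. Qed.

Lemma bf_compl f : boolean_function f -> boolean_function (fun x => ~` f x).
Proof. by move=> [t h]; exists (BCompl t) => x /=; rewrite h. Qed.

Lemma bf_bigjoin (X : Type) (r : seq X) (F : X -> ('I_n -> B) -> B) :
  (forall k, boolean_function (F k)) -> boolean_function (fun x => \join_(k <- r) F k x).
Proof.
move=> h; elim: r => [|k r IH]; first by apply: bf_ext (bf_const \bot) _ => x; rewrite big_nil.
by apply: bf_ext (bf_join (h k) IH) _ => x; rewrite big_cons.
Qed.

Lemma bf_bigmeet (X : Type) (r : seq X) (F : X -> ('I_n -> B) -> B) :
  (forall k, boolean_function (F k)) -> boolean_function (fun x => \meet_(k <- r) F k x).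
Proof.
move=> h; elim: r => [|k r IH]; first by apply: bf_ext (bf_const \top) _ => x; rewrite big_nil.
by apply: bf_ext (bf_meet (h k) IH) _ => x; rewrite big_cons.
Qed.

Lemma bf_minterm e : boolean_function (fun x : 'I_n -> B => minterm x e).
Proof.
apply: bf_bigmeet => i; rewrite /lit; case: (e i); first exact: bf_var.
exact/bf_compl/bf_var.
Qed.

End BooleanFunctions.

Section PermutationExtension.
Variable T : finType.
Implicit Types (A C U V W : {set T}).

Lemma equicard_inj A C :
  #|A| = #|C| -> exists h : T -> T, {in A, forall x, h x \in C} /\ {in A &, injective h}.
Proof.
move=> AC; have sAC : size (enum A) = size (enum C) by rewrite -!cardE.
have idx x : x \in A -> (index x (enum A) < size (enum C))%N.
  by move=> xA; rewrite -sAC index_mem mem_enum.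
exists (fun x => nth x (enum C) (index x (enum A))); split.
  by move=> x xA; rewrite -mem_enum mem_nth ?idx.
move=> x y xA yA /= e.
have : index x (enum A) = index y (enum A).
  apply/eqP; rewrite -(nth_uniq x (idx x xA) (idx y yA) (enum_uniq _)).
  by rewrite (set_nth_default y x (idx y yA)) e.
by rewrite -{2}(nth_index x (_ : x \in enum A)) ?mem_enum // => ->; rewrite nth_index ?mem_enum.
Qed.

(* A self-map of W that is injective on W is the restriction of a permutation
   of T (extend it by the identity outside W). *)
Lemma perm_of_stable W (g : T -> T) :
  {in W, forall x, g x \in W} -> {in W &, injective g} -> exists p : {perm T}, {in W, p =1 g}.
Proof.
move=> gW ginj; pose g' x := if x \in W then g x else x.
have g'inj : injective g'.
  move=> x y; rewrite /g'; case: ifP => xW; case: ifP => yW e.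
  - exact: ginj.
  - by move: (gW x xW); rewrite e yW.
  - by move: (gW y yW); rewrite -e xW.
  - exact: e.
by exists (perm g'inj) => x xW; rewrite permE /g' xW.
Qed.

(* A bijection f : U -> V between two subsets of W extends to a permutation
   of T that maps W into itself: send W :\: U bijectively onto W :\: V. *)
Lemma perm_extend U V W (f : T -> T) :
  U \subset W -> V \subset W -> {in U &, injective f} -> f @: U = V ->
  exists p : {perm T}, {in U, p =1 f} /\ {in W, forall x, p x \in W}.
Proof.
move=> sUW sVW finj fUV.
have fV x : x \in U -> f x \in V by move=> xU; rewrite -fUV imset_f.
have [h [hWV hinj]] : exists h : T -> T,
    {in W :\: U, forall x, h x \in W :\: V} /\ {in W :\: U &, injective h}.
  by apply: equicard_inj; rewrite !cardsD (setIidPr sUW) (setIidPr sVW) -fUV card_in_imset.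
pose g x := if x \in U then f x else h x.
have gV x : x \in W -> (g x \in V) = (x \in U).
  rewrite /g => xW; case: ifP => xU; first exact: fV.
  by have := hWV x; rewrite !inE xU xW => /(_ isT) /andP[/negbTE].
have gW : {in W, forall x, g x \in W}.
  move=> x xW; rewrite /g; case: ifP => xU; first exact: subsetP sVW _ (fV _ xU).
  by have := hWV x; rewrite !inE xU xW => /(_ isT) /andP[].
have ginj : {in W &, injective g}.
  move=> x y xW yW e; have xyU : (x \in U) = (y \in U) by rewrite -gV // e gV.
  rewrite /g in e; case xU: (x \in U) in xyU e; rewrite -xyU in e.
    by apply: finj; rewrite -?xyU.
  by apply: hinj; rewrite // !inE ?xU -?xyU ?xW ?yW.
have [p pg] := perm_of_stable gW ginj.
exists p; split=> x xU; last by rewrite pg ?gW.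
by rewrite pg ?(subsetP sUW) // /g xU.
Qed.

(* A permutation mapping W into itself also maps W into itself under its
   inverse, since it restricts to a bijection of the finite set W. *)
Lemma perm_stableV W (p : {perm T}) :
  {in W, forall x, p x \in W} -> {in W, forall x, (p^-1)%g x \in W}.
Proof.
move=> pW x xW.
have imW : p @: W = W.
  apply/eqP; rewrite eqEcard card_imset ?leqnn ?andbT; last exact: perm_inj.
  by apply/subsetP => _ /imsetP[y yW ->]; exact: pW.
by move: xW; rewrite -{1}imW => /imsetP[y yW ->]; rewrite permK.
Qed.

End PermutationExtension.

Section BooleanTransformations.
Variables (d : Order.disp_t) (B : ctbDistrLatticeType d) (n m : nat).

Lemma domain_term (U : ('I_n -> B) -> Prop) :
  boolean_domain U -> exists t : bterm B n, forall x, U x <-> beval t x = \bot.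
Proof. by move=> [f [[t ht] hU]]; exists t => x; rewrite -ht. Qed.

Lemma transformation_terms (U : ('I_n -> B) -> Prop) (V : ('I_m -> B) -> Prop)
    (F : ('I_n -> B) -> 'I_m -> B) : boolean_transformation U V F ->
  exists tF : 'I_m -> bterm B n, forall x, U x -> F x = (fun j => beval (tF j) x).
Proof.
move=> [_ [Fs [hFs hF]]].
have [tF htF] := ClassicalEpsilon.choice (fun j t => forall x, Fs j x = beval t x) hFs.
by exists tF => x Ux; apply: functional_extensionality => j; rewrite hF // htF.
Qed.

Lemma boolean_isomorphism_id (U : ('I_n -> B) -> Prop) : boolean_isomorphism U U id.
Proof.
split; last by split=> // y Uy; exists y.
by split=> //; exists (fun j x => x j); split=> // j; exact: bf_var.
Qed.

Lemma boolean_isomorphism_eq (U U' : ('I_n -> B) -> Prop) (V V' : ('I_m -> B) -> Prop)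
    (F : ('I_n -> B) -> 'I_m -> B) :
  (forall x, U x <-> U' x) -> (forall y, V y <-> V' y) ->
  boolean_isomorphism U' V' F -> boolean_isomorphism U V F.
Proof.
move=> eU eV [[FUV [Fs [hFs hF]]] [Finj Fsurj]]; split; last split.
- split; first by move=> x /eU /FUV /eV.
  by exists Fs; split=> // x /eU; exact: hF.
- by move=> x y /eU Ux /eU Uy; exact: Finj.
- by move=> y /eV /Fsurj [x [/eU Ux Fx]]; exists x.
Qed.

End BooleanTransformations.

Section Cells.
Variables (d : Order.disp_t) (B : ctbDistrLatticeType d) (n : nat).

Variables (tU tV tW : bterm B n) (tF : 'I_n -> bterm B n).

Definition inU (x : 'I_n -> B) := beval tU x = \bot.
Definition inV (x : 'I_n -> B) := beval tV x = \bot.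
Definition inW (x : 'I_n -> B) := beval tW x = \bot.
Definition Fterm (x : 'I_n -> B) : 'I_n -> B := fun j => beval (tF j) x.

Local Notation corners := {ffun 'I_n -> bool}.
Local Notation cindex := (corners + corners + corners + corners * 'I_n)%type.

Definition corner_const (k : cindex) : B :=
  match k with
  | inl (inl (inl e)) => beval tU (corner B e)
  | inl (inl (inr e)) => beval tV (corner B e)
  | inl (inr e) => beval tW (corner B e)
  | inr (e, j) => beval (tF j) (corner B e)
  end.

Local Notation signs := {ffun cindex -> bool}.

(* The cells, minterms of the corner constants, partition the top of B; on a
   nonzero cell s each datum becomes a {0,1}-valued one, read off from s. *)
Definition cell (s : signs) : B := minterm corner_const s.
Definition Ucell (s : signs) : {set corners} := [set e | ~~ s (inl (inl (inl e)))].
Definition Vcell (s : signs) : {set corners} := [set e | ~~ s (inl (inl (inr e)))].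
Definition Wcell (s : signs) : {set corners} := [set e | ~~ s (inl (inr e))].
Definition Fcell (s : signs) (e : corners) : corners := [ffun j => s (inr (e, j))].

Lemma cell_const (m : B) s k : m <= cell s -> m `&` corner_const k = m `&` bv B (s k).
Proof. exact: minterm_val. Qed.

Lemma cell_zero (m : B) s k : m <= cell s -> s k = false -> m `&` corner_const k = \bot.
Proof. by move=> hm hk; rewrite (cell_const k hm) hk meetx0. Qed.

Lemma cell_sign_false (m : B) s k :
  m <= cell s -> m != \bot -> m `&` corner_const k = \bot -> s k = false.
Proof. by move=> hm hm0 h; apply: (bv_inj hm0); rewrite -(cell_const k hm) h meetx0. Qed.

Lemma piece_inU (m : B) s x e :
  m <= cell s -> m <= minterm x e -> m != \bot -> inU x -> e \in Ucell s.
Proof.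
move=> ms mx hm xU; rewrite inE; apply/negbT/(cell_sign_false ms hm).
by rewrite /= -(beval_corner tU mx) xU meetx0.
Qed.

Lemma piece_inW (m : B) s x e :
  m <= cell s -> m <= minterm x e -> m != \bot -> inW x -> e \in Wcell s.
Proof.
move=> ms mx hm xW; rewrite inE; apply/negbT/(cell_sign_false ms hm).
by rewrite /= -(beval_corner tW mx) xW meetx0.
Qed.

Lemma eq_on_pieces (x : 'I_n -> B) (z1 z2 : B) :
  (forall s e, cell s `&` minterm x e != \bot ->
     cell s `&` minterm x e `&` z1 = cell s `&` minterm x e `&` z2) -> z1 = z2.
Proof.
move=> h; apply: (eq_on_cover (minterm_cover corner_const)) => s.
apply: (eq_on_cover (minterm_cover x)) => e.
rewrite !meetA ![minterm x e `&` cell s]meetC.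
by have [->|] := eqVneq (cell s `&` minterm x e) \bot; [rewrite !meet0x | exact: h].
Qed.

Definition glue (rho : signs -> corners -> corners) (x : 'I_n -> B) : 'I_n -> B :=
  fun j => \join_(s : signs) \join_(e : corners) (cell s `&` minterm x e `&` bv B (rho s e j)).

Lemma bf_glue rho j : boolean_function (fun x => glue rho x j).
Proof.
apply: bf_bigjoin => s; apply: bf_bigjoin => e.
by apply: bf_meet; [apply: bf_meet; [exact: bf_const | exact: bf_minterm] | exact: bf_const].
Qed.

Lemma glue_piece rho x s e (m : B) j :
  m <= cell s `&` minterm x e -> m `&` glue rho x j = m `&` bv B (rho s e j).
Proof.
move=> hm; have hs : m <= cell s := le_trans hm (leIl _ _).
have he : m <= minterm x e := le_trans hm (leIr _ _).
have disj p q r : m <= p -> p `&` q = \bot -> m `&` (q `&` r) = \bot.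
  by move=> mp hpq; apply/eqP; rewrite -lex0 -hpq leI2 ?leIl.
rewrite /glue big_distrr (bigD1 s) //= big_distrr (bigD1 e) //=.
rewrite [X in _ `|` X]big1 ?joinx0; last first.
  move=> s' hs'; rewrite big_distrr; apply: big1 => e' _.
  by rewrite -meetA; apply: disj hs _; rewrite minterm_disj // eq_sym.
rewrite [X in _ `|` X]big1 ?joinx0; last first.
  move=> e' he'; rewrite -meetA meetCA; apply: disj he _.
  by rewrite minterm_disj // eq_sym.
by rewrite meetA (meet_idPl hm).
Qed.

Section CellReduction.
(* The hypotheses of the theorem, for the expressions above, together with
   a point u0 of U used to complete partial points. *)
Hypothesis HUW : forall x, inU x -> inW x.
Hypothesis HVW : forall x, inV x -> inW x.
Hypothesis HFV : forall x, inU x -> inV (Fterm x).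
Hypothesis Hinj : forall x y, inU x -> inU y -> Fterm x = Fterm y -> x = y.
Hypothesis Hsurj : forall y, inV y -> exists x, inU x /\ Fterm x = y.
Variable u0 : 'I_n -> B.
Hypothesis Hu0 : inU u0.

Lemma mix_inU s e : e \in Ucell s -> inU (mix (cell s) (corner B e) u0).
Proof. by rewrite inE => /negbTE hk; apply: beval_mix_zero Hu0; exact: cell_zero hk. Qed.

Lemma mix_inV s e : e \in Vcell s -> inV (mix (cell s) (corner B e) (Fterm u0)).
Proof. by rewrite inE => /negbTE hk; apply: beval_mix_zero (HFV Hu0); exact: cell_zero hk. Qed.

Lemma Fterm_mix s e j :
  cell s `&` Fterm (mix (cell s) (corner B e) u0) j = cell s `&` corner B (Fcell s e) j.
Proof.
rewrite /Fterm beval_mix_l -/(corner_const (inr (e, j))).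
by rewrite (cell_const _ (le_refl _)) /corner ffunE.
Qed.

Lemma cell_UW s : cell s != \bot -> Ucell s \subset Wcell s.
Proof.
move=> hs; apply/subsetP => e eU; rewrite inE; apply/negbT/(cell_sign_false (le_refl _) hs).
by rewrite /= -(beval_mix_l _ _ _ u0) (HUW (mix_inU eU)) meetx0.
Qed.

Lemma cell_VW s : cell s != \bot -> Vcell s \subset Wcell s.
Proof.
move=> hs; apply/subsetP => e eV; rewrite inE; apply/negbT/(cell_sign_false (le_refl _) hs).
by rewrite /= -(beval_mix_l _ _ _ (Fterm u0)) (HVW (mix_inV eV)) meetx0.
Qed.

Lemma cell_inj s : cell s != \bot -> {in Ucell s &, injective (Fcell s)}.
Proof.
move=> hs e1 e2 e1U e2U he.
have hx : mix (cell s) (corner B e1) u0 = mix (cell s) (corner B e2) u0.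
  apply: Hinj; [exact: mix_inU | exact: mix_inU |].
  apply: functional_extensionality => j; apply: (eq_on_halves (a := cell s)).
    by rewrite !Fterm_mix he.
  by rewrite !beval_mix_r.
apply: (corner_inj hs) => i.
by rewrite -(mix_l _ (corner B e1) u0) -(mix_l _ (corner B e2) u0) hx.
Qed.

Lemma cell_image s : cell s != \bot -> Fcell s @: Ucell s = Vcell s.
Proof.
move=> hs; apply/eqP; rewrite eqEsubset; apply/andP; split.
  apply/subsetP => _ /imsetP[e eU ->]; rewrite inE; apply/negbT/(cell_sign_false (le_refl _) hs).
  rewrite /= -[RHS](meetx0 (cell s)) -(HFV (mix_inU eU)); apply: beval_local => j.
  by rewrite Fterm_mix.
apply/subsetP => v vV; have [x [xU ex]] := Hsurj (mix_inV vV).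
have [e he] := cover_meets (minterm_cover x) hs.
have ms : cell s `&` minterm x e <= cell s := leIl _ _.
have mx : cell s `&` minterm x e <= minterm x e := leIr _ _.
apply/imsetP; exists e; first exact: piece_inU ms mx he xU.
apply: (corner_inj he) => j; rewrite /corner ffunE -(cell_const _ ms) /=.
rewrite -(beval_corner _ mx) -/(Fterm x j) ex.
by rewrite -(meet_idPl ms) -!meetA mix_l.
Qed.

Lemma exists_cell_perms : exists pi : signs -> {perm corners}, forall s, cell s != \bot ->
  {in Ucell s, pi s =1 Fcell s} /\ {in Wcell s, forall e, pi s e \in Wcell s}.
Proof.
apply: (ClassicalEpsilon.choice (fun s (p : {perm corners}) => cell s != \bot ->
  {in Ucell s, p =1 Fcell s} /\ {in Wcell s, forall e, p e \in Wcell s})) => s.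
have [hs|] := boolP (cell s != \bot); last by exists 1%g.
have [p hp] := perm_extend (cell_UW hs) (cell_VW hs) (cell_inj hs) (cell_image hs).
by exists p.
Qed.

Section Gluing.
Variable pi : signs -> {perm corners}.
Hypothesis Hpi : forall s, cell s != \bot ->
  {in Ucell s, pi s =1 Fcell s} /\ {in Wcell s, forall e, pi s e \in Wcell s}.

Definition Fext : ('I_n -> B) -> 'I_n -> B := glue (fun s e => pi s e).
Definition Finv : ('I_n -> B) -> 'I_n -> B := glue (fun s e => (pi s)^-1%g e).

(* Fext extends F: on U, each piece of x is sent to the corner Fcell s e. *)
Lemma Fext_agree x : inU x -> Fext x = Fterm x.
Proof.
move=> xU; apply: functional_extensionality => j; apply: (eq_on_pieces (x := x)) => s e hm.
have ms : cell s `&` minterm x e <= cell s := leIl _ _.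
have mx : cell s `&` minterm x e <= minterm x e := leIr _ _.
have [piF _] := Hpi (le_nonzero ms hm).
rewrite (glue_piece _ _ (le_refl _)) piF ?(piece_inU ms mx hm xU) // ffunE.
by rewrite -(cell_const _ ms) /= -(beval_corner _ mx).
Qed.

(* Fext maps W into W, as each pi s preserves Wcell s. *)
Lemma Fext_W x : inW x -> inW (Fext x).
Proof.
move=> xW; apply: (eq_on_pieces (x := x)) => s e hm.
have ms : cell s `&` minterm x e <= cell s := leIl _ _.
have mx : cell s `&` minterm x e <= minterm x e := leIr _ _.
have [_ piW] := Hpi (le_nonzero ms hm).
have := piW e (piece_inW ms mx hm xW); rewrite inE => /negbTE hk.
rewrite meetx0 (beval_local tW (y := corner B (pi s e))); last first.
  by move=> i; rewrite (glue_piece _ _ (le_refl _)).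
by rewrite -/(corner_const (inl (inr (pi s e)))) (cell_zero ms hk).
Qed.

(* Points with the same image agree on every piece, since each pi s is
   injective on corners. *)
Lemma Fext_inj : injective Fext.
Proof.
move=> x y exy; apply: functional_extensionality => i.
apply: (eq_on_pieces (x := x)) => s e _; apply: (eq_on_cover (minterm_cover y)) => g.
rewrite !meetA; set m := minterm y g `&` cell s `&` minterm x e.
have [->|hm] := eqVneq m \bot; first by rewrite !meet0x.
have ms : m <= cell s by apply: le_trans (leIl _ _) (leIr _ _).
have mx : m <= minterm x e by exact: leIr.
have my : m <= minterm y g by apply: le_trans (leIl _ _) (leIl _ _).
have mxe : m <= cell s `&` minterm x e by rewrite lexI ms mx.
have myg : m <= cell s `&` minterm y g by rewrite lexI ms my.
have epg : pi s e = pi s g.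
  apply/ffunP => j; apply: (bv_inj hm).
  have := congr1 (fun z => m `&` z j) exy.
  by rewrite /= (glue_piece _ _ mxe) (glue_piece _ _ myg).
by rewrite (minterm_val _ mx) (minterm_val _ my) (perm_inj epg).
Qed.

Lemma Finv_piece y s g :
  cell s `&` minterm y g <= minterm (Finv y) ((pi s)^-1%g g).
Proof. by apply: minterm_ge => i; rewrite (glue_piece _ _ (le_refl _)). Qed.

Lemma Fext_Finv y : Fext (Finv y) = y.
Proof.
apply: functional_extensionality => j; apply: (eq_on_pieces (x := y)) => s g _.
have ms : cell s `&` minterm y g <= cell s := leIl _ _.
have my : cell s `&` minterm y g <= minterm y g := leIr _ _.
have mxe : cell s `&` minterm y g <= cell s `&` minterm (Finv y) ((pi s)^-1%g g).
  by rewrite lexI ms Finv_piece.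
by rewrite (glue_piece _ _ mxe) permKV (minterm_val _ my).
Qed.

Lemma Finv_W y : inW y -> inW (Finv y).
Proof.
move=> yW; apply: (eq_on_pieces (x := y)) => s g hm.
have ms : cell s `&` minterm y g <= cell s := leIl _ _.
have my : cell s `&` minterm y g <= minterm y g := leIr _ _.
have [_ piW] := Hpi (le_nonzero ms hm).
have := perm_stableV piW (piece_inW ms my hm yW); rewrite inE => /negbTE hk.
rewrite meetx0 (beval_corner _ (Finv_piece y s g)).
by rewrite -/(corner_const (inl (inr ((pi s)^-1%g g)))) (cell_zero ms hk).
Qed.

End Gluing.

Lemma term_extension : exists F' : ('I_n -> B) -> 'I_n -> B,
  boolean_isomorphism inW inW F' /\ forall x, inU x -> F' x = Fterm x.
Proof.
have [pi Hpi] := exists_cell_perms.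
exists (Fext pi); split; last exact: Fext_agree.
split; first split; first exact: Fext_W.
  by exists (fun j x => Fext pi x j); split=> // j; exact: bf_glue.
split; first by move=> x y _ _; exact: Fext_inj.
by move=> y yW; exists (Finv pi y); split; [exact: Finv_W | exact: Fext_Finv].
Qed.

End CellReduction.
End Cells.

Theorem theorem1 (d : Order.disp_t) (B : ctbDistrLatticeType d) (n : nat)
  (U V W : ('I_n -> B) -> Prop) :
  boolean_domain U -> boolean_domain V -> boolean_domain W ->
  (forall x, U x \/ V x -> W x) ->
  forall F : ('I_n -> B) -> ('I_n -> B),
  boolean_isomorphism U V F ->
  exists F' : ('I_n -> B) -> ('I_n -> B),
    boolean_isomorphism W W F' /\ (forall x, U x -> F' x = F x).
Proof.
move=> /domain_term[tU eU] /domain_term[tV eV] /domain_term[tW eW] UVW F isoF.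
have [[u0 Uu0]|noU] := classic (exists u0, U u0); last first.
  by exists id; split=> [|x Ux]; [exact: boolean_isomorphism_id | case: noU; exists x].
have [tF eF] : exists tF, forall x, U x -> F x = Fterm tF x := transformation_terms isoF.1.
have [[FUV _] [Finj Fsurj]] := isoF.
have [F' [isoF' F'F]] : exists F', boolean_isomorphism (inW tW) (inW tW) F' /\
    forall x, inU tU x -> F' x = Fterm tF x.
  have u0U : inU tU u0 by apply/eU.
  apply: (term_extension (tV := tV) _ _ _ _ _ u0U); rewrite /inU /inV /inW.
  - by move=> x /eU Ux; apply/eW/UVW; left.
  - by move=> x /eV Vx; apply/eW/UVW; right.
  - by move=> x /eU Ux; rewrite -eF //; apply/eV/FUV.
  - by move=> x y /eU Ux /eU Uy; rewrite -!eF //; exact: Finj.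
  - by move=> y /eV /Fsurj [x [Ux Fx]]; exists x; split; [exact/eU | rewrite -eF].
exists F'; split; first exact: (boolean_isomorphism_eq eW eW isoF').
by move=> x Ux; rewrite F'F ?eF //; exact/eU.
Qed.
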